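(* Let $\Gamma$ be the graph with vertex set $\{v_{n,k}: n\in\mathbb Z,\ k\in\mathbb Z/10\mathbb Z\}$ and edge set $\{v_{n,k}v_{n,k+1}\}\cup\{v_{n,2k+1}v_{n+1,4k+2}\}$ ($n\in\mathbb Z$, $k\in\mathbb Z/10\mathbb Z$). Then every automorphism $\phi$ of $\Gamma$ is uniquely determined by the pair $(\phi(v_{0,1}),\phi(v_{0,2}))$.
   Context: Indices $k$ are taken modulo 10. *)

From mathcomp Require Import all_boot all_order all_algebra.
Set Implicit Arguments. Unset Strict Implicit. Unset Printing Implicit Defensive.
Import GRing.Theory.
Local Open Scope ring_scope.

Definition vertex : Type := (int * 'Z_10)%type.

Definition v (n : int) (k : 'Z_10) : vertex := (n, k).

Definition gedge (x y : vertex) : Prop :=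
  (exists (n : int) (k : 'Z_10), x = v n k /\ y = v n (k + 1)) \/
  (exists (n : int) (k : 'Z_10), x = v n (k *+ 2 + 1) /\ y = v (n + 1) (k *+ 4 + 2)).

Definition adj (x y : vertex) : Prop := gedge x y \/ gedge y x.

Definition is_automorphism (phi : vertex -> vertex) : Prop :=
  bijective phi /\ (forall x y, adj x y <-> adj (phi x) (phi y)).

From mathcomp Require Import all_boot all_order all_algebra.
Set Implicit Arguments. Unset Strict Implicit. Unset Printing Implicit Defensive.
Import GRing.Theory.
Local Open Scope ring_scope.

(* Every vertex v_{n,k} has exactly three neighbours: the
   ring neighbours v_{n,k+1}, v_{n,k-1} and one "rung", going up to
   v_{n+1,2k} when k is odd and down to v_{n-1,3k+5} when k is even.  It
   suffices to show that an automorphism theta fixing v_{0,1} and v_{0,2}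
   (namely psi^-1 o phi) is the identity.
   1. 8-cycles single out the ring: if theta fixes consecutive ring vertices
      a = v_{n,k-1}, b = v_{n,k}, then v_{n,k+1} is the only neighbour y of b
      (y <> a) such that every path w-a-b-y lies on a simple 8-cycle; this is
      an automorphism-invariant property, so theta fixes v_{n,k+1} too, and by
      induction the whole layer n.
   2. A fixed layer forces the rungs: theta then fixes v_{n+1,0}, v_{n+1,2}
      (rungs of v_{n,5}, v_{n,1}), hence their unique common neighbour
      v_{n+1,1}, hence layer n+1 by step 1; symmetrically for layer n-1.
   The general facts (automorphisms, cycles through a path, fixed
   neighbours) are proved first for arbitrary locally finite graphs; the
   finitely many facts about Gamma itself are checked by computation in
   layer 0 and transported to every layer by the vertical translations. *)

Definition nbrel (T : eqType) (nb : T -> seq T) : rel T := fun x y => y \in nb x.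

Section LocallyFiniteGraph.
Variables (T : eqType) (nb : T -> seq T).
Local Notation e := (nbrel nb).

Definition graph_aut (f : T -> T) : Prop := bijective f /\ {mono f : x y / e x y}.

Lemma graph_aut_comp f g : graph_aut f -> graph_aut g -> graph_aut (f \o g).
Proof.
move=> [bf mf] [bg mg]; split; first exact: bij_comp.
by move=> x y /=; rewrite mf mg.
Qed.

Lemma graph_aut_inv f g : graph_aut f -> cancel f g -> cancel g f -> graph_aut g.
Proof.
move=> [_ mf] fK gK; split; first by exists f.
by move=> x y; rewrite -mf !gK.
Qed.

Definition cycle_ext (m : nat) (p : seq T) : Prop :=
  exists t, (size (p ++ t) == m) && ucycleb e (p ++ t).

Lemma cycle_ext_map f m p :
  injective f -> {mono f : x y / e x y} -> cycle_ext m p -> cycle_ext m (map f p).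
Proof.
move=> injf mf [t /andP[sz uc]]; exists (map f t).
rewrite -map_cat size_map sz /ucycleb cycle_map map_inj_uniq //.
by rewrite (eq_cycle (e' := e)) //; move: uc => /andP[].
Qed.

Fixpoint walks (k : nat) (x : T) : seq (seq T) :=
  if k is k'.+1 then flatten [seq [seq y :: t | t <- walks k' y] | y <- nb x]
  else [:: [::]].

Lemma walksP x t : path e x t -> t \in walks (size t) x.
Proof.
elim: t x => [|y t IH] x /=; first by rewrite inE.
move=> /andP[exy pt]; apply/flattenP.
exists [seq y :: t' | t' <- walks (size t) y]; first exact: map_f.
exact/map_f/IH.
Qed.

Definition cycle_extb (m : nat) (x : T) (q : seq T) : bool :=
  has (fun t => (size (x :: q ++ t) == m) && ucycleb e (x :: q ++ t))
      (walks (m - (size q).+1) (last x q)).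

Lemma cycle_extP m x q : reflect (cycle_ext m (x :: q)) (cycle_extb m x q).
Proof.
apply: (iffP hasP) => [[t _ Ht] | [t /andP[sz uc]]]; first by exists t.
exists t; last by rewrite sz.
have size_t : (m - (size q).+1)%N = size t.
  by rewrite -(eqP sz) /= size_cat -addSn addKn.
move: uc => /andP[]; rewrite /= rcons_cat cat_path rcons_path => /and3P[_ pt _] _.
by rewrite size_t; exact: walksP.
Qed.

Definition cycle_succ (m : nat) (a b y : T) : Prop :=
  [/\ e b y, y != a & forall w, e a w -> w != b -> cycle_ext m [:: w; a; b; y]].

Lemma cycle_succ_aut f m a b y :
  graph_aut f -> cycle_succ m a b y -> cycle_succ m (f a) (f b) (f y).
Proof.
move=> [[g fK gK] mf] [eby ya Hw]; have injf := can_inj fK.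
split; [by rewrite mf | by rewrite (inj_eq injf) |].
move=> w eaw wb; rewrite -[w]gK.
apply: (cycle_ext_map (p := [:: g w; a; b; y]) injf mf); apply: Hw.
  by rewrite -mf gK.
by apply: contra wb => /eqP <-; rewrite gK.
Qed.

Definition cycle_succb (m : nat) (a b y : T) : bool :=
  [&& e b y, y != a & all (fun w => (w == b) || cycle_extb m w [:: a; b; y]) (nb a)].

Lemma cycle_succP m a b y : reflect (cycle_succ m a b y) (cycle_succb m a b y).
Proof.
apply: (iffP and3P) => [[eby ya /allP Hw] | [eby ya Hw]]; split=> //.
  move=> w eaw wb; have := Hw w eaw; rewrite (negbTE wb) /=.
  exact/cycle_extP.
apply/allP => w eaw; case: eqP => //= /eqP wb.
exact/cycle_extP/Hw.
Qed.

Lemma aut_fix_last_nbr f (F : pred T) y x :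
  graph_aut f -> (forall z, F z -> f z = z) -> F y -> e y x ->
  all (fun z => (z == x) || F z) (nb y) -> f x = x.
Proof.
move=> [[g fK _] mf] fixF Fy eyx /allP Hnb.
have : e y (f x) by rewrite -{1}(fixF y Fy) mf.
move=> /Hnb /orP[/eqP // | /fixF fz].
by apply: (can_inj fK); rewrite fz.
Qed.

Lemma aut_fix_common_nbr f y1 y2 x :
  graph_aut f -> f y1 = y1 -> f y2 = y2 -> e y1 x -> e y2 x ->
  all (fun z => e y2 z ==> (z == x)) (nb y1) -> f x = x.
Proof.
move=> [_ mf] f1 f2 e1x e2x /allP Hnb.
have e1 : e y1 (f x) by rewrite -f1 mf.
have e2 : e y2 (f x) by rewrite -f2 mf.
by apply/eqP; move: (Hnb _ e1); rewrite e2.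
Qed.

End LocallyFiniteGraph.

Lemma forall_Z10 (P : pred 'Z_10) : all P [seq i%:R | i <- iota 0 10] -> forall k, P k.
Proof.
move=> /allP HP k; apply: HP; apply/mapP; exists (nat_of_ord k); last by rewrite natr_Zp.
by rewrite mem_iota add0n ltn_ord.
Qed.

(* Used to present v_{n,1}, v_{n,2} as v_{n,k-1}, v_{n,k}. *)
Lemma Z10_2_sub_1 : 2 - 1 = 1 :> 'Z_10.
Proof. by apply/eqP; vm_compute. Qed.

Definition rung (x : vertex) : vertex :=
  if odd x.2 then (x.1 + 1, x.2 *+ 2) else (x.1 - 1, x.2 *+ 3 + 5).

Definition nbrs (x : vertex) : seq vertex := [:: (x.1, x.2 + 1); (x.1, x.2 - 1); rung x].

Notation adjb := (nbrel nbrs).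

(* Unfolding nbrs without unfolding the arithmetic of 'Z_10. *)
Lemma nbrsE n k : nbrs (n, k) = [:: (n, k + 1); (n, k - 1); rung (n, k)].
Proof. by []. Qed.

Lemma rung_up n j : rung (n, j *+ 2 + 1) = (n + 1, j *+ 4 + 2).
Proof.
have odd_j := forall_Z10 (P := fun j => odd (j *+ 2 + 1 : 'Z_10)%R) erefl j.
rewrite /rung ifT; last exact: odd_j.
by congr (_, _); rewrite mulrnDl -mulrnA.
Qed.

Lemma rung_down n j : rung (n + 1, j *+ 4 + 2) = (n, j *+ 2 + 1).
Proof.
have := forall_Z10 (P := fun j =>
  ~~ odd (j *+ 4 + 2 : 'Z_10)%R && ((j *+ 4 + 2) *+ 3 + 5 == j *+ 2 + 1)) erefl j.
move=> /andP[even_j /eqP e3]; rewrite /rung ifF; last exact: negbTE even_j.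
by rewrite e3 addrK.
Qed.

(* Every residue has the shape needed by rung_up or rung_down. *)
Lemma odd_shape (k : 'Z_10) : odd k -> k = ((k - 1) *+ 3) *+ 2 + 1.
Proof.
have := forall_Z10 (P := fun k => odd k ==> (k == ((k - 1) *+ 3) *+ 2 + 1)) erefl k.
by move=> /implyP H /H /eqP.
Qed.

Lemma even_shape (k : 'Z_10) : ~~ odd k -> k = ((k *+ 3 + 4) *+ 3) *+ 4 + 2.
Proof.
have := forall_Z10 (P := fun k => ~~ odd k ==> (k == ((k *+ 3 + 4) *+ 3) *+ 4 + 2)) erefl k.
by move=> /implyP H /H /eqP.
Qed.

Lemma adjE x y : adj x y <-> adjb x y.
Proof.
split.
- case=> [[[n [k [-> ->]]] | [n [k [-> ->]]]] | [[n [k [-> ->]]] | [n [k [-> ->]]]]].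
  + by rewrite /nbrel nbrsE !inE eqxx.
  + by rewrite /nbrel nbrsE rung_up !inE eqxx !orbT.
  + by rewrite /nbrel nbrsE addrK !inE eqxx !orbT.
  + by rewrite /nbrel nbrsE rung_down !inE eqxx !orbT.
- case: x => n k; rewrite /nbrel nbrsE !inE => /or3P[] /eqP ->.
  + by left; left; exists n, k.
  + by right; left; exists n, (k - 1); rewrite /v subrK.
  + case: (boolP (odd k)) => [/odd_shape | /even_shape] ->.
      by rewrite rung_up; left; right; exists n, ((k - 1) *+ 3).
    rewrite -{2}[n](subrK 1) rung_down; right; right.
    by exists (n - 1), ((k *+ 3 + 4) *+ 3); rewrite subrK.
Qed.

Lemma aut_of_is_automorphism phi : is_automorphism phi -> graph_aut nbrs phi.
Proof.
move=> [bphi Hphi]; split=> // x y.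
by apply/idP/idP => /adjE H; apply/adjE; apply/(Hphi x y).
Qed.

Definition shift (n : int) (x : vertex) : vertex := (n + x.1, x.2).

Lemma shiftK n : cancel (shift n) (shift (- n)).
Proof. by case=> m k; rewrite /shift /= addKr. Qed.

Lemma shiftKV n : cancel (shift (- n)) (shift n).
Proof. by case=> m k; rewrite /shift /= addNKr. Qed.

Lemma nbrs_shift n x : nbrs (shift n x) = map (shift n) (nbrs x).
Proof. by case: x => m k; rewrite /nbrs /rung /shift /=; case: (odd k); rewrite /= !addrA. Qed.

Lemma shift_aut n : graph_aut nbrs (shift n).
Proof.
split; first exact: Bijective (shiftK n) (shiftKV n).
by move=> x y; rewrite /nbrel nbrs_shift (mem_map (can_inj (shiftK n))).
Qed.

Definition conj_shift (n : int) (f : vertex -> vertex) : vertex -> vertex :=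
  shift (- n) \o f \o shift n.

Lemma conj_shift_aut n f : graph_aut nbrs f -> graph_aut nbrs (conj_shift n f).
Proof. by move=> af; do !apply: graph_aut_comp => //; exact: shift_aut. Qed.

Definition layer_fixed (f : vertex -> vertex) (n : int) : Prop :=
  forall k : 'Z_10, f (n, k) = (n, k).

Lemma layer_fixedP f n : layer_fixed f n -> forall z : vertex, z.1 == n -> f z = z.
Proof. by move=> fixn [m k] /eqP /= ->. Qed.

Lemma conj_shift_fix n f x : conj_shift n f x = x <-> f (shift n x) = shift n x.
Proof.
split=> [H | H]; last by rewrite /conj_shift /= H shiftK.
by rewrite -{2}H /conj_shift /= shiftKV.
Qed.

Lemma layer_fixed_conj n f m : layer_fixed (conj_shift n f) m <-> layer_fixed f (n + m).
Proof.
by split=> H k; [exact: (conj_shift_fix n f (m, k)).1 (H k)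
                | exact: (conj_shift_fix n f (m, k)).2 (H k)].
Qed.

(* Step 1 in layer 0, by computation: v_{0,k+1} is the 8-cycle successor of
   v_{0,k-1}, v_{0,k}, while the rung y of v_{0,k} is not, because the path
   rung(v_{0,k-1})-v_{0,k-1}-v_{0,k}-y lies on no simple 8-cycle. *)
Lemma ring_succ0 k y : cycle_succ nbrs 8 (0, k - 1) (0, k) y <-> y = (0, k + 1).
Proof.
have succb0 := forall_Z10 (P := fun k =>
  all (fun y => cycle_succb nbrs 8 (0, k - 1) (0, k) y == (y == (0, k + 1))) (nbrs (0, k)))
  (erefl true) k.
split=> [Hy | ->].
  have [eky _ _] := Hy.
  move/eqP: (allP succb0 y eky) => succb_y.
  by apply/eqP; rewrite -succb_y; exact/cycle_succP.
apply/cycle_succP; have := allP succb0 (0, k + 1).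
by rewrite nbrsE !inE eqxx => /(_ isT) /eqP ->.
Qed.

Lemma ring_step0 f k : graph_aut nbrs f ->
  f (0, k - 1) = (0, k - 1) -> f (0, k) = (0, k) -> f (0, k + 1) = (0, k + 1).
Proof.
move=> af fa fb; apply/ring_succ0; rewrite -fa -fb.
exact/(cycle_succ_aut af)/ring_succ0.
Qed.

Lemma ring_layer0 f k : graph_aut nbrs f ->
  f (0, k - 1) = (0, k - 1) -> f (0, k) = (0, k) -> layer_fixed f 0.
Proof.
move=> af fa fb.
have fixj (j : nat) : f (0, k + j%:R - 1) = (0, k + j%:R - 1) /\ f (0, k + j%:R) = (0, k + j%:R).
  elim: j => [|j [IHa IHb]]; first by rewrite addr0.
  by rewrite mulrSr addrA addrK; split=> //; exact: ring_step0.
by move=> k'; have [_] := fixj (nat_of_ord (k' - k)); rewrite natr_Zp addrC subrK.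
Qed.

Lemma ring_layer f n k : graph_aut nbrs f ->
  f (n, k - 1) = (n, k - 1) -> f (n, k) = (n, k) -> layer_fixed f n.
Proof.
move=> af fa fb; rewrite -[n]addr0; apply/layer_fixed_conj.
by apply: (ring_layer0 (k := k)); [exact: conj_shift_aut | |];
  apply/conj_shift_fix; rewrite /shift /= addr0.
Qed.

(* Step 2 from layer 0 to layers 1 and -1: the rungs v_{1,0}, v_{1,2} of
   v_{0,5}, v_{0,1} are their last unfixed neighbours, and v_{1,1} is their
   only common neighbour (dually v_{-1,1}, v_{-1,3} and v_{-1,2}). *)
Lemma layer_up0 f : graph_aut nbrs f -> layer_fixed f 0 -> layer_fixed f 1.
Proof.
move=> af /layer_fixedP fix0.
have f10 : f (1, 0) = (1, 0).
  by apply: (aut_fix_last_nbr (y := (0, 5))) af fix0 _ _ _; vm_compute.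
have f12 : f (1, 2) = (1, 2).
  by apply: (aut_fix_last_nbr (y := (0, 1))) af fix0 _ _ _; vm_compute.
have f11 : f (1, 1) = (1, 1).
  by apply: (aut_fix_common_nbr (y1 := (1, 0)) (y2 := (1, 2))) af f10 f12 _ _ _; vm_compute.
by apply: (ring_layer (k := 1)); rewrite ?subrr.
Qed.

Lemma layer_down0 f : graph_aut nbrs f -> layer_fixed f 0 -> layer_fixed f (-1).
Proof.
move=> af /layer_fixedP fix0.
have f1 : f (-1, 1) = (-1, 1).
  by apply: (aut_fix_last_nbr (y := (0, 2))) af fix0 _ _ _; vm_compute.
have f3 : f (-1, 3) = (-1, 3).
  by apply: (aut_fix_last_nbr (y := (0, 6))) af fix0 _ _ _; vm_compute.
have f2 : f (-1, 2) = (-1, 2).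
  by apply: (aut_fix_common_nbr (y1 := (-1, 1)) (y2 := (-1, 3))) af f1 f3 _ _ _; vm_compute.
by apply: (ring_layer (k := 2)) => //; rewrite Z10_2_sub_1.
Qed.

Lemma layer_neighbours f n : graph_aut nbrs f -> layer_fixed f n ->
  layer_fixed f (n + 1) /\ layer_fixed f (n - 1).
Proof.
move=> af fixn; have afc := conj_shift_aut n af.
have fix0 : layer_fixed (conj_shift n f) 0 by apply/layer_fixed_conj; rewrite addr0.
by split; apply/layer_fixed_conj; [exact: layer_up0 | exact: layer_down0].
Qed.

Lemma layers_fixed f : graph_aut nbrs f -> layer_fixed f 0 -> forall x, f x = x.
Proof.
move=> af fix0.
have up (m : nat) : layer_fixed f m.
  by elim: m => // m IH; rewrite -addn1 PoszD; exact: (layer_neighbours af IH).1.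
have down (m : nat) : layer_fixed f (- m%:Z).
  elim: m => [|m IH]; first by rewrite oppr0.
  by rewrite -addn1 PoszD opprD; exact: (layer_neighbours af IH).2.
by case=> [[m|m] k]; [exact: up | rewrite NegzE; exact: down].
Qed.

Theorem mainTheorem5 (phi psi : vertex -> vertex) :
  is_automorphism phi -> is_automorphism psi ->
  phi (v 0 1) = psi (v 0 1) -> phi (v 0 2) = psi (v 0 2) ->
  forall x : vertex, phi x = psi x.
Proof.
move=> /aut_of_is_automorphism aphi /aut_of_is_automorphism apsi E1 E2 x.
have [[g psiK gK] _] := apsi.
have atheta : graph_aut nbrs (g \o phi).
  exact: graph_aut_comp (graph_aut_inv apsi psiK gK) aphi.
have fix0 : layer_fixed (g \o phi) 0.
  apply: (ring_layer (k := 2)) => //=; last by rewrite E2 psiK.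
  by rewrite Z10_2_sub_1 E1 psiK.
by rewrite -[phi x]gK -{2}(layers_fixed atheta fix0 x).
Qed.
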